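(* For the $2$-server problem on the line and any parameter $\lambda\in[0,1]$, the algorithm LambdaDC satisfies, for every instance $I$ and every prediction with prediction error $\eta$, \[ \mathrm{LambdaDC}(I)\le \min\left\{(1+\lambda)\left(1+\frac{\eta}{\mathrm{OPT}(I)}\right),\ 1+\frac1\lambda\right\}\mathrm{OPT}(I)+c, \] with $c\ge0$ depending only on the initial configuration (where $1/\lambda=\infty$ for $\lambda=0$). Thus it is $(1+\lambda)$-consistent and $(1+1/\lambda)$-robust.
   Context: The $k$-server problem on the line (here $k=2$): servers on $\mathbb{R}$ labeled $s_1\le s_2$, requests $r_t\in\mathbb{R}$ revealed online, each served by moving a server to it; cost = total distance moved; $\mathrm{OPT}$ is the optimal offline cost. A prediction gives for each request $r_t$ an index $p_t\in\{1,2\}$; FtP serves each request with the predicted server (relabeling by position), and $\eta=\mathrm{FtP}(I)-\mathrm{OPT}(I)$. $\alpha$-consistent: cost $\le\alpha\,\mathrm{OPT}+c$ whenever $\eta=0$; $\beta$-robust: cost $\le\beta\,\mathrm{OPT}+c$ for all predictions. LambdaDC: if $r_t<s_1$ or $r_t>s_k$, move only the closest server; if $s_i<r_t<s_{i+1}$ and $p_t\le i$, move $s_i$ at speed $1$ and $s_{i+1}$ at speed $\lambda$ towards $r_t$ until one reaches it; if $p_t\ge i+1$, the speeds are swapped. *)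

From HB Require Import structures.
From mathcomp Require Import all_boot all_order all_algebra.
From mathcomp Require Import classical_sets reals.
Set Implicit Arguments. Unset Strict Implicit. Unset Printing Implicit Defensive.
Import Order.TTheory GRing.Theory Num.Theory.
Local Open Scope ring_scope.
Local Open Scope classical_set_scope.

(* Predicted server index p_t in {1,2}: S1 = leftmost server, S2 = rightmost. *)
Inductive srv := S1 | S2.

Section KServer.
Variable R : realType.

(* A configuration of the two servers, (s_1, s_2) with s_1 <= s_2 for the
   online algorithms (servers are relabeled by position). *)
Definition config := (R * R)%type.

Definition move_cost (c c' : config) : R := `|c'.1 - c.1| + `|c'.2 - c.2|.

Definition lambdaDC_step (lam : R) (c : config) (r : R) (p : srv) : config :=
  let: (a, b) := c in
  if r <= a then (r, b)
  else if b <= r then (a, r)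
  else
    let d1 := r - a in let d2 := b - r in
    match p with
    | S1 => (* s_1 at speed 1, s_2 at speed lam *)
        if lam * d1 <= d2 then (r, b - lam * d1) else (a + d2 / lam, r)
    | S2 => (* s_1 at speed lam, s_2 at speed 1 *)
        if lam * d2 <= d1 then (a + lam * d2, r) else (r, b - d1 / lam)
    end.

(* Total cost of LambdaDC on requests rs, with prediction p (p t is the
   prediction for the t-th request of the suffix, indexed from 0). *)
Fixpoint lambdaDC_cost (lam : R) (c : config) (rs : seq R) (p : nat -> srv) : R :=
  match rs with
  | [::] => 0
  | r :: rs' =>
      let c' := lambdaDC_step lam c r (p 0%N) in
      move_cost c c' + lambdaDC_cost lam c' rs' (fun t => p t.+1)
  end.

(* Follow-the-Prediction: move the predicted server (by position) to r,
   then relabel by position. *)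
Definition sort2 (x y : R) : config := if x <= y then (x, y) else (y, x).

Definition ftp_step (c : config) (r : R) (p : srv) : config * R :=
  let: (a, b) := c in
  match p with
  | S1 => (sort2 r b, `|r - a|)
  | S2 => (sort2 a r, `|r - b|)
  end.

Fixpoint ftp_cost (c : config) (rs : seq R) (p : nat -> srv) : R :=
  match rs with
  | [::] => 0
  | r :: rs' =>
      let cc := ftp_step c r (p 0%N) in
      cc.2 + ftp_cost cc.1 rs' (fun t => p t.+1)
  end.

(* Offline schedules: sched 0 is the initial configuration, sched t.+1 the
   configuration after serving request t; servers may move arbitrarily. *)
Definition valid_schedule (c0 : config) (rs : seq R) (sched : nat -> config) : Prop :=
  sched 0%N = c0 /\
  forall t : nat, (t < size rs)%N ->
    nth 0 rs t = (sched t.+1).1 \/ nth 0 rs t = (sched t.+1).2.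

Definition schedule_cost (rs : seq R) (sched : nat -> config) : R :=
  \sum_(t < size rs) move_cost (sched t) (sched t.+1).

Definition OPT (c0 : config) (rs : seq R) : R :=
  inf [set schedule_cost rs sched | sched in valid_schedule c0 rs].

Definition pred_error (c0 : config) (rs : seq R) (p : nat -> srv) : R :=
  ftp_cost c0 rs p - OPT c0 rs.

End KServer.

(** A potential-function argument in the style of the Double Coverage
    analysis.  Let [M(c, z)] be the cost of the uncrossed matching between
    LambdaDC's servers [c] and a sorted configuration [z] covering the request,
    and let the spread of [c] be the distance between its two servers.  A step
    moving one outer server by [d] raises the spread by [d] and lowers [M] by
    [d]; an inner step moving the servers by [u] and [lam u] lowers the spread
    by [(1 + lam) u] and raises [M] by at most [(1 - lam) u], and even lowers
    it by [(1 - lam) u] when the fast server is the one matched to the request.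
    Hence [(1 + lam) M + spread] pays [lam] times every LambdaDC move against an
    arbitrary offline schedule, and [(1 + lam) M + lam spread] pays every
    LambdaDC move against Follow-the-Prediction, whose moved server is
    LambdaDC's fast one; a unit of movement of the competitor raises either
    potential by at most [1 + lam]. *)

From mathcomp Require Import all_boot all_order all_algebra.
From mathcomp Require Import classical_sets reals.
From mathcomp Require Import ring lra.
Import Order.TTheory GRing.Theory Num.Theory.
Set Implicit Arguments. Unset Strict Implicit.
Local Open Scope ring_scope.

Ltac split_norms :=
  repeat match goal with
  | |- context [ `|?t| ] =>
      first [ rewrite (@ger0_norm _ t); last by lra
            | rewrite (@ler0_norm _ t); last by lra
            | let h := fresh "h" in
              have [h|h] := lerP 0 t; [rewrite (ger0_norm h) | rewrite (ltr0_norm h)] ]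
  end.

Arguments move_cost : simpl never.
Arguments sort2 : simpl never.

Section Matching.
Variable R : realType.
Implicit Types (a b x y r : R) (c z : config R).

Definition spread c : R := c.2 - c.1.

Definition sort_config z : config R := sort2 z.1 z.2.

Lemma move_cost_ge0 c z : 0 <= move_cost c z.
Proof. exact: addr_ge0. Qed.

Lemma move_costxx c : move_cost c c = 0.
Proof. by rewrite /move_cost !subrr normr0 addr0. Qed.

Lemma move_cost_triangle c c' z : move_cost c z <= move_cost c c' + move_cost c' z.
Proof. by rewrite /move_cost addrACA lerD // addrC ler_distD. Qed.

Lemma sort2_id x y : x <= y -> sort2 x y = (x, y).
Proof. by rewrite /sort2 => ->. Qed.

Lemma sort2C x y : sort2 x y = sort2 y x.
Proof. by rewrite /sort2; case: (ltgtP x y) => [||->]. Qed.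

Lemma sort_config_sorted z : (sort_config z).1 <= (sort_config z).2.
Proof. by case: z => x y; rewrite /sort_config /sort2 /=; case: (lerP x y) => [|/ltW]. Qed.

Lemma sort_config_id z : z.1 <= z.2 -> sort_config z = z.
Proof. by case: z => x y /= /sort2_id. Qed.

Lemma mem_sort_config r z :
  r = z.1 \/ r = z.2 -> r = (sort_config z).1 \/ r = (sort_config z).2.
Proof. by rewrite /sort_config /sort2; case: lerP => _ /= [->|->]; tauto. Qed.

Lemma move_cost_sort_config a b z : a <= b ->
  move_cost (a, b) (sort_config z) <= move_cost (a, b) z.
Proof.
case: z => x y ab; rewrite /sort_config /sort2 /=; case: (lerP x y) => // yx.
by rewrite /move_cost /=; split_norms; lra.
Qed.

Lemma move_cost_sort_config2 z z' :
  move_cost (sort_config z) (sort_config z') <= move_cost z z'.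
Proof.
case: z z' => [x y] [x' y']; rewrite /sort_config /=.
wlog xy : x y x' y' / x <= y.
  move=> hwlog; case: (lerP x y) => [|/ltW yx]; first exact: hwlog.
  rewrite sort2C [sort2 x' _]sort2C.
  by have := hwlog y x y' x' yx; rewrite /move_cost /= addrC [X in _ <= X]addrC.
by rewrite sort2_id // (move_cost_sort_config (x', y')).
Qed.

Lemma move_cost_left_onto a b r z : z.1 <= z.2 -> r = z.1 \/ r = z.2 -> r <= a ->
  move_cost (r, b) z = move_cost (a, b) z - (a - r).
Proof.
case: z => x y /= xy r_xy ra; rewrite /move_cost /=.
by case: r_xy => ?; subst r; split_norms; lra.
Qed.

Lemma move_cost_right_onto a b r z : z.1 <= z.2 -> r = z.1 \/ r = z.2 -> b <= r ->
  move_cost (a, r) z = move_cost (a, b) z - (r - b).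
Proof.
case: z => x y /= xy r_xy br; rewrite /move_cost /=.
by case: r_xy => ?; subst r; split_norms; lra.
Qed.

Lemma move_cost_toward_left a b d1 d2 r y : 0 <= d1 -> 0 <= d2 -> a + d1 <= r ->
  move_cost (a + d1, b - d2) (r, y) <= move_cost (a, b) (r, y) - d1 + d2.
Proof. by move=> *; rewrite /move_cost /=; split_norms; lra. Qed.

Lemma move_cost_toward_right a b d1 d2 x r : 0 <= d1 -> 0 <= d2 -> r <= b - d2 ->
  move_cost (a + d1, b - d2) (x, r) <= move_cost (a, b) (x, r) + d1 - d2.
Proof. by move=> *; rewrite /move_cost /=; split_norms; lra. Qed.

Lemma move_cost_left a b r : move_cost (a, b) (r, b) = `|r - a|.
Proof. by rewrite /move_cost /= subrr normr0 addr0. Qed.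

Lemma move_cost_right a b r : move_cost (a, b) (a, r) = `|r - b|.
Proof. by rewrite /move_cost /= subrr normr0 add0r. Qed.

Lemma move_cost_inward a b d1 d2 : 0 <= d1 -> 0 <= d2 ->
  move_cost (a, b) (a + d1, b - d2) = d1 + d2.
Proof.
move=> *; rewrite /move_cost /= [a + d1]addrC addrK addrAC subrr add0r normrN.
by rewrite !ger0_norm.
Qed.

Definition ftp_move z r p : config R :=
  match p with S1 => (r, z.2) | S2 => (z.1, r) end.

Lemma ftp_stepE z r p :
  ftp_step z r p = (sort_config (ftp_move z r p), move_cost z (ftp_move z r p)).
Proof. by case: z p => x y []; rewrite /= ?move_cost_left ?move_cost_right. Qed.

Lemma mem_ftp_move z r p : r = (ftp_move z r p).1 \/ r = (ftp_move z r p).2.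
Proof. by case: p; [left | right]. Qed.

End Matching.

Lemma le_OPT (R : realType) (c0 : config R) rs e :
  (forall sched, valid_schedule c0 rs sched -> e <= schedule_cost rs sched) ->
  e <= OPT c0 rs.
Proof.
move=> le_e; apply: lb_le_inf; last by move=> _ [sched valid <-]; apply: le_e.
pose serve_with_both t := if t is t'.+1 then (nth 0 rs t', nth 0 rs t') else c0.
by exists (schedule_cost rs serve_with_both), serve_with_both; split=> // t _; left.
Qed.

Arguments lambdaDC_step : simpl never.
Arguments ftp_step : simpl never.

Section LambdaDC.
Variables (R : realType) (lam : R).
Hypothesis lam01 : 0 <= lam <= 1.
Implicit Types (a b r : R) (c z : config R).

Variant lambdaDC_step_spec a b r : srv -> config R -> Prop :=
  | StepLeft p of r <= a : lambdaDC_step_spec a b r p (r, b)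
  | StepRight p of b <= r : lambdaDC_step_spec a b r p (a, r)
  | StepInnerS1 u of 0 <= u & a + u <= r & r <= b - lam * u :
      lambdaDC_step_spec a b r S1 (a + u, b - lam * u)
  | StepInnerS2 u of 0 <= u & a + lam * u <= r & r <= b - u :
      lambdaDC_step_spec a b r S2 (a + lam * u, b - u).

Lemma lambdaDC_stepP a b r p :
  lambdaDC_step_spec a b r p (lambdaDC_step lam (a, b) r p).
Proof.
have [lam0 lam1] := andP lam01.
rewrite /lambdaDC_step; case: (lerP r a) => ra; first exact: StepLeft.
case: (lerP b r) => br; first exact: StepRight.
case: p.
- case: (lerP (lam * (r - a)) (b - r)) => h.
    have -> : (r, b - lam * (r - a)) = (a + (r - a), b - lam * (r - a)).
      by rewrite subrKC.
    by apply: StepInnerS1; lra.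
  have lam_gt0 : 0 < lam by nra.
  have lam_u : lam * ((b - r) / lam) = b - r by rewrite mulrC divfK ?gt_eqF.
  have -> : (a + (b - r) / lam, r) = (a + (b - r) / lam, b - lam * ((b - r) / lam)).
    by rewrite lam_u subKr.
  by apply: StepInnerS1; nra.
- case: (lerP (lam * (b - r)) (r - a)) => h.
    have -> : (a + lam * (b - r), r) = (a + lam * (b - r), b - (b - r)).
      by rewrite subKr.
    by apply: StepInnerS2; lra.
  have lam_gt0 : 0 < lam by nra.
  have lam_u : lam * ((r - a) / lam) = r - a by rewrite mulrC divfK ?gt_eqF.
  have -> : (r, b - (r - a) / lam) = (a + lam * ((r - a) / lam), b - (r - a) / lam).
    by rewrite lam_u subrKC.
  by apply: StepInnerS2; nra.
Qed.

Lemma lambdaDC_step_sorted a b r p c' :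
  a <= b -> lambdaDC_step_spec a b r p c' -> c'.1 <= c'.2.
Proof. by move=> ab [] * /=; lra. Qed.

Definition robust_potential c z := (1 + lam) * move_cost c z + spread c.

Definition consistent_potential c z := (1 + lam) * move_cost c z + lam * spread c.

Lemma robust_potential_step a b r p c' z :
  a <= b -> z.1 <= z.2 -> r = z.1 \/ r = z.2 -> lambdaDC_step_spec a b r p c' ->
  lam * move_cost (a, b) c' + robust_potential c' z <= robust_potential (a, b) z.
Proof.
move=> ab zs r_z; rewrite /robust_potential /spread.
have [lam0 lam1] := andP lam01; have lam1_ge0 : 0 <= 1 + lam by lra.
case=> [_ ra | _ br | u u0 aur rbu | u u0 aur rbu] /=.
- have mc : move_cost (a, b) (r, b) = a - r.
    by rewrite move_cost_left distrC ger0_norm ?subr_ge0.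
  by rewrite mc (move_cost_left_onto b zs r_z ra); lra.
- have mc : move_cost (a, b) (a, r) = r - b by rewrite move_cost_right ger0_norm ?subr_ge0.
  by rewrite mc (move_cost_right_onto a zs r_z br); lra.
- have [v0 vu] : 0 <= lam * u /\ lam * u <= u by split; nra.
  have dM : move_cost (a + u, b - lam * u) z <= move_cost (a, b) z + u - lam * u.
    case: z zs r_z => x y /= _ [] ?; subst r.
    + by have := move_cost_toward_left b y u0 v0 aur; lra.
    + by have := move_cost_toward_right a x u0 v0 rbu; lra.
  by have := ler_wpM2l lam1_ge0 dM; rewrite move_cost_inward //; lra.
- have [v0 vu] : 0 <= lam * u /\ lam * u <= u by split; nra.
  have dM : move_cost (a + lam * u, b - u) z <= move_cost (a, b) z + u - lam * u.
    case: z zs r_z => x y /= _ [] ?; subst r.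
    + by have := move_cost_toward_left b y v0 u0 aur; lra.
    + by have := move_cost_toward_right a x v0 u0 rbu; lra.
  by have := ler_wpM2l lam1_ge0 dM; rewrite move_cost_inward //; lra.
Qed.

Lemma consistent_potential_step a b r p c' z :
  a <= b -> lambdaDC_step_spec a b r p c' ->
  move_cost (a, b) c' + consistent_potential c' (sort_config (ftp_move z r p))
    <= (1 + lam) * move_cost z (ftp_move z r p) + consistent_potential (a, b) z.
Proof.
move=> ab step; set z' := ftp_move z r p; rewrite /consistent_potential /spread.
have [lam0 lam1] := andP lam01; have lam1_ge0 : 0 <= 1 + lam by lra.
have ftpM : move_cost (a, b) (sort_config z') <= move_cost (a, b) z + move_cost z z'.
  exact: le_trans (move_cost_sort_config _ ab) (move_cost_triangle _ _ _).
have r_z' := mem_sort_config (mem_ftp_move z r p).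
move: step ftpM r_z'; rewrite {}/z'.
case=> [q ra | q br | u u0 aur rbu | u u0 aur rbu] /= ftpM r_z'.
- have mc : move_cost (a, b) (r, b) = a - r.
    by rewrite move_cost_left distrC ger0_norm ?subr_ge0.
  rewrite mc (move_cost_left_onto b (sort_config_sorted _) r_z' ra).
  by have := ler_wpM2l lam1_ge0 ftpM; lra.
- have mc : move_cost (a, b) (a, r) = r - b by rewrite move_cost_right ger0_norm ?subr_ge0.
  rewrite mc (move_cost_right_onto a (sort_config_sorted _) r_z' br).
  by have := ler_wpM2l lam1_ge0 ftpM; lra.
- have v0 : 0 <= lam * u by nra.
  have dM : move_cost (a + u, b - lam * u) (sort_config (r, z.2))
            <= move_cost (a, b) z + move_cost z (r, z.2) - u + lam * u.
    apply: le_trans (move_cost_sort_config _ _) _; first lra.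
    have := move_cost_toward_left b z.2 u0 v0 aur.
    have := move_cost_triangle (a, b) z (r, z.2); lra.
  by have := ler_wpM2l lam1_ge0 dM; rewrite move_cost_inward //; lra.
- have v0 : 0 <= lam * u by nra.
  have dM : move_cost (a + lam * u, b - u) (sort_config (z.1, r))
            <= move_cost (a, b) z + move_cost z (z.1, r) - u + lam * u.
    apply: le_trans (move_cost_sort_config _ _) _; first lra.
    have := move_cost_toward_right a z.1 v0 u0 rbu.
    have := move_cost_triangle (a, b) z (z.1, r); lra.
  by have := ler_wpM2l lam1_ge0 dM; rewrite move_cost_inward //; lra.
Qed.

Lemma robust_potential_ge0 c z : c.1 <= c.2 -> 0 <= robust_potential c z.
Proof.
have := move_cost_ge0 c z; rewrite /robust_potential /spread; case/andP: lam01; nra.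
Qed.

Lemma consistent_potential_ge0 c z : c.1 <= c.2 -> 0 <= consistent_potential c z.
Proof.
have := move_cost_ge0 c z; rewrite /consistent_potential /spread; case/andP: lam01; nra.
Qed.

(* The offline servers are not labeled by position; LambdaDC is compared with
   their sorted positions. *)
Lemma robust_potential_adversary c z0 z1 :
  robust_potential c (sort_config z1)
    <= robust_potential c (sort_config z0) + (1 + lam) * move_cost z0 z1.
Proof.
have lam1_ge0 : 0 <= 1 + lam by case/andP: lam01; lra.
have dM : move_cost c (sort_config z1) <= move_cost c (sort_config z0) + move_cost z0 z1.
  apply: le_trans (move_cost_triangle _ (sort_config z0) _) _.
  by rewrite lerD2l move_cost_sort_config2.
by have := ler_wpM2l lam1_ge0 dM; rewrite /robust_potential; lra.
Qed.

Lemma schedule_cost_cons r rs sched :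
  schedule_cost (r :: rs) sched
    = move_cost (sched 0%N) (sched 1%N) + schedule_cost rs (fun t => sched t.+1).
Proof. by rewrite /schedule_cost big_ord_recl. Qed.

Lemma valid_schedule_behead r rs sched :
  valid_schedule (sched 0%N) (r :: rs) sched ->
  valid_schedule (sched 1%N) rs (fun t => sched t.+1).
Proof. by move=> [_ serve]; split=> // t; apply: (serve t.+1). Qed.

Lemma lambdaDC_cost_robust rs c p sched :
  c.1 <= c.2 -> valid_schedule (sched 0%N) rs sched ->
  lam * lambdaDC_cost lam c rs p
    <= (1 + lam) * schedule_cost rs sched + robust_potential c (sort_config (sched 0%N)).
Proof.
elim: rs c p sched => [|r rs IH] [a b] p sched /= ab valid.
  rewrite /schedule_cost big_ord0 !mulr0 add0r; exact: robust_potential_ge0.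
have step := lambdaDC_stepP a b r (p 0%N).
have served : r = (sched 1%N).1 \/ r = (sched 1%N).2 by case: valid => _ /(_ 0%N erefl).
have := robust_potential_step ab (sort_config_sorted _) (mem_sort_config served) step.
have := IH _ (fun t => p t.+1) _ (lambdaDC_step_sorted ab step) (valid_schedule_behead valid).
have := robust_potential_adversary (a, b) (sched 0%N) (sched 1%N).
by rewrite schedule_cost_cons; lra.
Qed.

Lemma lambdaDC_cost_consistent rs c z p :
  c.1 <= c.2 -> z.1 <= z.2 ->
  lambdaDC_cost lam c rs p <= (1 + lam) * ftp_cost z rs p + consistent_potential c z.
Proof.
elim: rs c z p => [|r rs IH] [a b] z p /= ab zs.
  by rewrite mulr0 add0r; apply: consistent_potential_ge0.
have step := lambdaDC_stepP a b r (p 0%N).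
have := consistent_potential_step z ab step.
have := IH _ (sort_config (ftp_move z r (p 0%N))) (fun t => p t.+1)
  (lambdaDC_step_sorted ab step) (sort_config_sorted _).
by rewrite ftp_stepE /=; lra.
Qed.

Lemma lambdaDC_consistent c0 rs p : c0.1 <= c0.2 ->
  lambdaDC_cost lam c0 rs p <= (1 + lam) * ftp_cost c0 rs p + lam * spread c0.
Proof.
move=> c0s; have := @lambdaDC_cost_consistent rs c0 c0 p c0s c0s.
by rewrite /consistent_potential move_costxx mulr0 add0r.
Qed.

Lemma lambdaDC_robust c0 rs p : 0 < lam -> c0.1 <= c0.2 ->
  lambdaDC_cost lam c0 rs p <= (1 + lam^-1) * OPT c0 rs + lam^-1 * spread c0.
Proof.
move=> lam_gt0 c0s.
have lamV_gt0 : 0 < lam^-1 by rewrite invr_gt0.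
suff : (lambdaDC_cost lam c0 rs p - lam^-1 * spread c0) / (1 + lam^-1) <= OPT c0 rs.
  by rewrite ler_pdivrMr; lra.
apply: le_OPT => sched valid; rewrite ler_pdivrMr; last by lra.
have [sched0 _] := valid.
have := @lambdaDC_cost_robust rs c0 p sched c0s.
rewrite sched0 sort_config_id // /robust_potential move_costxx mulr0 add0r => /(_ valid).
move=> /(ler_wpM2l (ltW lamV_gt0)); rewrite mulKf ?gt_eqF //.
have -> : lam^-1 * ((1 + lam) * schedule_cost rs sched + spread c0)
        = (1 + lam^-1) * schedule_cost rs sched + lam^-1 * spread c0.
  by field; rewrite gt_eqF.
lra.
Qed.
End LambdaDC.

Theorem theorem4 (R : realType) (lam s1 s2 : R) :
  0 <= lam <= 1 -> s1 <= s2 ->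
  exists c : R, 0 <= c /\
    forall (rs : seq R) (p : nat -> srv),
      lambdaDC_cost lam (s1, s2) rs p
        <= (1 + lam) * (OPT (s1, s2) rs + pred_error (s1, s2) rs p) + c /\
      (0 < lam ->
       lambdaDC_cost lam (s1, s2) rs p <= (1 + lam^-1) * OPT (s1, s2) rs + c).
Proof.
move=> lam01 s12; have [lam0 _] := andP lam01.
have spread_lam : 0 <= lam * (s2 - s1) by apply: mulr_ge0; lra.
have spread_lamV : 0 <= lam^-1 * (s2 - s1) by apply: mulr_ge0; rewrite ?invr_ge0; lra.
exists (lam * (s2 - s1) + lam^-1 * (s2 - s1)); split; first lra.
move=> rs p; split.
  rewrite /pred_error subrKC.
  have := lambdaDC_consistent lam01 (c0 := (s1, s2)) rs p s12.
  by rewrite /spread /=; lra.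
move=> lam_gt0; have := lambdaDC_robust lam01 (c0 := (s1, s2)) rs p lam_gt0 s12.
by rewrite /spread /=; lra.
Qed.
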